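(* Let $\mathcal{T}$ be a triangulated category with arbitrary coproducts and a distinguished object $S$. Every ghost in $\mathcal{T}$ is trivial if and only if every object of $\mathcal{T}$ is a retract of a coproduct of suspensions of $S$.
   Context: $\pi_*(X)=[S,X]_*$, the graded group of maps $\Sigma^nS\to X$. A map $\phi\colon M\to N$ in $\mathcal{T}$ is a ghost if the induced map $\pi_*(M)\to\pi_*(N)$ is zero. *)

From HB Require Import structures.
From mathcomp Require Import all_boot all_algebra.
Unset Printing Implicit Defensive.
Import GRing.Theory.
Local Open Scope ring_scope.

Record precat := PreCat {
  obj : Type;
  Mor : obj -> obj -> zmodType;
  comp : forall {X Y Z : obj}, Mor Y Z -> Mor X Y -> Mor X Z;
  idm : forall X : obj, Mor X X;
  compA : forall X Y Z W (h : Mor Z W) (g : Mor Y Z) (f : Mor X Y),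
      comp h (comp g f) = comp (comp h g) f;
  comp1m : forall X Y (f : Mor X Y), comp (idm Y) f = f;
  compm1 : forall X Y (f : Mor X Y), comp f (idm X) = f;
  compDl : forall X Y Z (g g' : Mor Y Z) (f : Mor X Y),
      comp (g + g') f = comp g f + comp g' f;
  compDr : forall X Y Z (g : Mor Y Z) (f f' : Mor X Y),
      comp g (f + f') = comp g f + comp g f'
}.
Arguments comp {p X Y Z} _ _.
Arguments idm {p}.
Arguments Mor {p}.

Section Cat.
Variable C : precat.

Definition is_iso {X Y : obj C} (f : Mor X Y) : Prop :=
  exists g : Mor Y X, comp g f = idm X /\ comp f g = idm Y.

Definition is_zero_obj (Z : obj C) : Prop :=
  (forall X (f : Mor Z X), f = 0) /\ (forall X (f : Mor X Z), f = 0).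

Definition is_coproduct (I : Type) (F : I -> obj C) (P : obj C)
    (inj : forall i, Mor (F i) P) : Prop :=
  forall (X : obj C) (f : forall i, Mor (F i) X),
    exists! u : Mor P X, forall i, comp u (inj i) = f i.

Definition has_coproducts : Prop :=
  forall (I : Type) (F : I -> obj C),
    exists (P : obj C) (inj : forall i, Mor (F i) P), is_coproduct I F P inj.

(* additive: zero object and binary coproducts (= biproducts) *)
Definition additive : Prop :=
  (exists Z : obj C, is_zero_obj Z) /\
  (forall X Y : obj C, exists (P : obj C) (inj : forall b : bool, Mor (if b then X else Y) P),
      is_coproduct bool (fun b : bool => if b then X else Y) P inj).

Definition is_retract (X Y : obj C) : Prop :=
  exists (s : Mor X Y) (r : Mor Y X), comp r s = idm X.

Record shift := Shift {
  sh : obj C -> obj C;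
  shm : forall {X Y}, Mor X Y -> Mor (sh X) (sh Y);
  shm_add : forall X Y (f g : Mor X Y), shm (f + g) = shm f + shm g;
  shm_comp : forall X Y Z (g : Mor Y Z) (f : Mor X Y),
      shm (comp g f) = comp (shm g) (shm f);
  shm_id : forall X, shm (idm X) = idm (sh X);
  unsh : obj C -> obj C;
  unshm : forall {X Y}, Mor X Y -> Mor (unsh X) (unsh Y);
  unshm_add : forall X Y (f g : Mor X Y), unshm (f + g) = unshm f + unshm g;
  unshm_comp : forall X Y Z (g : Mor Y Z) (f : Mor X Y),
      unshm (comp g f) = comp (unshm g) (unshm f);
  unshm_id : forall X, unshm (idm X) = idm (unsh X);
  sh_eta : forall {X}, Mor X (unsh (sh X));
  sh_eta_iso : forall X, is_iso (@sh_eta X);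
  sh_eta_nat : forall X Y (f : Mor X Y),
      comp (unshm (shm f)) (@sh_eta X) = comp (@sh_eta Y) f;
  sh_eps : forall {X}, Mor (sh (unsh X)) X;
  sh_eps_iso : forall X, is_iso (@sh_eps X);
  sh_eps_nat : forall X Y (f : Mor X Y),
      comp f (@sh_eps X) = comp (@sh_eps Y) (shm (unshm f))
}.

Variable Sg : shift.

Definition shpow (n : int) (X : obj C) : obj C :=
  match n with
  | Posz k => iter k (sh Sg) X
  | Negz k => iter k.+1 (unsh Sg) X
  end.

Record triangle := Tri {
  t1 : obj C; t2 : obj C; t3 : obj C;
  tf : Mor t1 t2; tg : Mor t2 t3; th : Mor t3 (sh Sg t1)
}.

Arguments Tri {t1 t2 t3}.

Definition tri_morph (T T' : triangle) (a : Mor (t1 T) (t1 T'))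
    (b : Mor (t2 T) (t2 T')) (c : Mor (t3 T) (t3 T')) : Prop :=
  [/\ comp b (tf T) = comp (tf T') a,
      comp c (tg T) = comp (tg T') b &
      comp (shm Sg a) (th T) = comp (th T') c].

Definition rotate (T : triangle) : triangle :=
  @Tri (t2 T) (t3 T) (sh Sg (t1 T)) (tg T) (th T) (- shm Sg (tf T)).

Definition triangulated_axioms (dist : triangle -> Prop) : Prop :=
  (forall T T' a b c, dist T -> tri_morph T T' a b c ->
      is_iso a -> is_iso b -> is_iso c -> dist T') /\
  (forall X Z : obj C, is_zero_obj Z -> dist (@Tri X X Z (idm X) 0 0)) /\
  (forall X Y (f : Mor X Y), exists Z (g : Mor Y Z) (h : Mor Z (sh Sg X)),
      dist (Tri f g h)) /\
  (forall T, dist T <-> dist (rotate T)) /\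
  (forall T T' a b, dist T -> dist T' -> comp b (tf T) = comp (tf T') a ->
      exists c, tri_morph T T' a b c) /\
  (forall X Y Z Z' X' Y' (f : Mor X Y) (g : Mor Y Z)
      (u : Mor Y Z') (u' : Mor Z' (sh Sg X))
      (v : Mor Z X') (v' : Mor X' (sh Sg Y))
      (w : Mor Z Y') (w' : Mor Y' (sh Sg X)),
      dist (Tri f u u') -> dist (Tri g v v') -> dist (Tri (comp g f) w w') ->
      exists (a : Mor Z' Y') (b : Mor Y' X'),
        dist (Tri a b (comp (shm Sg u) v')) /\
        [/\ comp a u = comp w g, comp w' a = u',
            comp b w = v & comp v' b = comp (shm Sg f) w']).

End Cat.

Arguments Tri {C Sg t1 t2 t3}.
Arguments is_iso {C X Y}.
Arguments is_retract {C}.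

Record tricat := TriCat {
  tcat :> precat;
  tshift : shift tcat;
  tdist : triangle tcat tshift -> Prop;
  tadditive : additive tcat;
  taxioms : triangulated_axioms tcat tshift tdist
}.

Section Ghosts.
Variable T : tricat.
Variable S : obj T.

Definition Sigma (n : int) (X : obj T) : obj T := shpow T (tshift T) n X.

(* pi_n(X) = [S, X]_n = Mor (Sigma^n S) X; phi is a ghost if it induces zero
   on pi_* *)
Definition is_ghost (M N : obj T) (phi : Mor M N) : Prop :=
  forall (n : int) (a : Mor (Sigma n S) M), comp phi a = 0.

Definition retract_of_coprod_susp (X : obj T) : Prop :=
  exists (I : Type) (n : I -> int) (P : obj T)
         (inj : forall i, Mor (Sigma (n i) S) P),
    is_coproduct T I (fun i => Sigma (n i) S) P inj /\ is_retract X P.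
End Ghosts.
Arguments is_ghost {T} S {M N} phi.
Arguments retract_of_coprod_susp {T} S X.

(* Take the coproduct P of Sigma^n S over all maps a : Sigma^n S -> X and let
   p : P -> X be the induced map, so that every such a factors through p.  In a
   distinguished triangle P -> X -> Z -> Sigma P the map X -> Z kills p, hence
   is a ghost, hence vanishes; a triangle whose second map vanishes splits, so X
   is a retract of P.  Conversely, a ghost vanishes on every summand Sigma^n S of
   a coproduct, hence on the coproduct, hence on each of its retracts. *)
From mathcomp Require Import all_boot all_algebra.
Import GRing.Theory.
Local Open Scope ring_scope.

Arguments sh {C}.
Arguments shm {C} s {X Y}.
Arguments unshm {C} s {X Y}.
Arguments sh_eta {C} s {X}.
Arguments t1 {C Sg}.
Arguments t2 {C Sg}.
Arguments tf {C Sg}.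
Arguments tg {C Sg}.

Section Preadditive.
Variable C : precat.

Lemma comp0m (X Y Z : obj C) (f : Mor X Y) : comp (0 : Mor Y Z) f = 0.
Proof. by apply: (addrI (comp 0 f)); rewrite -compDl !addr0. Qed.

Lemma compm0 (X Y Z : obj C) (g : Mor Y Z) : comp g (0 : Mor X Y) = 0.
Proof. by apply: (addrI (comp g 0)); rewrite -compDr !addr0. Qed.

Lemma compNm (X Y Z : obj C) (g : Mor Y Z) (f : Mor X Y) :
  comp (- g) f = - comp g f.
Proof. by apply/eqP; rewrite -addr_eq0 -compDl addNr comp0m. Qed.

Lemma coproduct_hom_eq0 (I : Type) (F : I -> obj C) (P X : obj C)
    (inj : forall i, Mor (F i) P) (u : Mor P X) :
  is_coproduct C I F P inj -> (forall i, comp u (inj i) = 0) -> u = 0.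
Proof.
move=> cop u_inj; have [v [_ v_uniq]] := cop X (fun _ => 0).
by rewrite -(v_uniq u) // (v_uniq 0) // => i; rewrite comp0m.
Qed.

End Preadditive.

Section Shift.
Variables (C : precat) (Sg : shift C).

Lemma shm_split_epi (X Y : obj C) (f : Mor X Y) (c : Mor (sh Sg Y) (sh Sg X)) :
  comp (shm Sg f) c = idm (sh Sg Y) -> exists s : Mor Y X, comp f s = idm Y.
Proof.
move=> fc.
have [etaXV [_ etaXK]] := sh_eta_iso C Sg X.
have [etaYV [etaYVK _]] := sh_eta_iso C Sg Y.
have unsh_fc : comp (unshm Sg (shm Sg f)) (unshm Sg c) = idm _.
  by rewrite -unshm_comp fc unshm_id.
have f_eta : f = comp etaYV (comp (unshm Sg (shm Sg f)) (sh_eta Sg)).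
  by rewrite sh_eta_nat compA etaYVK comp1m.
exists (comp etaXV (comp (unshm Sg c) (sh_eta Sg))).
rewrite f_eta -!compA (compA _ _ _ _ _ _ etaXV) etaXK comp1m.
by rewrite (compA _ _ _ _ _ _ (unshm Sg c)) unsh_fc comp1m etaYVK.
Qed.

End Shift.

Section Triangulated.
Context {T : tricat}.
Let Sg := tshift T.

Lemma dist_comp_eq0 {D : triangle T Sg} : tdist T D -> comp (tg D) (tf D) = 0.
Proof.
move=> distD; have [[Z Z0] _] := tadditive T.
have [_ [dist_triv [_ [_ [TR3 _]]]]] := taxioms T.
have [c [_ c_tg _]] :=
  TR3 _ _ _ _ (dist_triv (t1 D) Z Z0) distD (erefl (comp (tf D) (idm _))).
by rewrite /= compm0 in c_tg.
Qed.

(* Comparing the rotations of [Y = Y -> 0 -> Sigma Y] and of [D] along the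
   identity of [Y] yields a right inverse of [Sigma (tf D)]. *)
Lemma dist_split_epi {D : triangle T Sg} :
  tdist T D -> tg D = 0 -> exists s : Mor (t2 D) (t1 D), comp (tf D) s = idm _.
Proof.
case: D => X Y Z f g h /= distD g0; have [[Z0 Z0_zero] _] := tadditive T.
have [_ [dist_triv [_ [TR2 [TR3 _]]]]] := taxioms T.
have dist_rot_triv := proj1 (TR2 _) (dist_triv Y Z0 Z0_zero).
have dist_rotD := proj1 (TR2 _) distD.
have sq : comp (0 : Mor Z0 Z) 0 = comp g (idm Y) by rewrite g0 !comp0m.
have [c [_ _ c_th]] := TR3 _ _ _ _ dist_rot_triv dist_rotD sq.
move: c_th; rewrite /= shm_id comp1m compNm => /eqP; rewrite eqr_opp => /eqP fc.
exact: shm_split_epi (esym fc).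
Qed.

End Triangulated.

Section Ghosts.
Variables (T : tricat) (S : obj T).

Lemma ghost_from_retract_coprod_susp_eq0 (M N : obj T) (phi : Mor M N) :
  retract_of_coprod_susp S M -> is_ghost S phi -> phi = 0.
Proof.
move=> [I [n [P [inj [cop [s [r rs]]]]]]] ghost_phi.
have phi_r : comp phi r = 0.
  by apply: coproduct_hom_eq0 cop _ => i; rewrite -compA ghost_phi.
by rewrite -(compm1 _ _ _ phi) -rs compA phi_r comp0m.
Qed.

Lemma retract_coprod_susp_of_no_ghosts (X : obj T) :
  has_coproducts T ->
  (forall (M N : obj T) (phi : Mor M N), is_ghost S phi -> phi = 0) ->
  retract_of_coprod_susp S X.
Proof.
move=> coprods no_ghosts.
pose I := {n : int & Mor (Sigma T n S) X}.
have [P [inj cop]] := coprods I (fun i => Sigma T (projT1 i) S).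
have [p [p_inj _]] := cop X (fun i => projT2 i).
have [_ [_ [complete _]]] := taxioms T.
have [Z [g [h distD]]] := complete _ _ p.
have g_ghost : is_ghost S g.
  move=> n a; have /= <- := p_inj (existT _ n a).
  by rewrite compA (dist_comp_eq0 distD) comp0m.
have [s ps] := dist_split_epi distD (no_ghosts _ _ _ g_ghost).
by exists I, (fun i => projT1 i), P, inj; split => //; exists s, p.
Qed.

End Ghosts.

Theorem corollary2p4 (T : tricat) (S : obj T) :
  has_coproducts T ->
  ((forall (M N : obj T) (phi : Mor M N), is_ghost S phi -> phi = 0) <->
   (forall X : obj T, retract_of_coprod_susp S X)).
Proof.
move=> coprods; split.
- by move=> no_ghosts X; exact: retract_coprod_susp_of_no_ghosts.
- by move=> retracts M N phi; exact: ghost_from_retract_coprod_susp_eq0.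
Qed.
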